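(* Let $\mathscr{A},\mathscr{B}$ be $\sigma$-structures and $k>0$. Then $\mathscr{A}\leftrightarrow^{\mathbb{E}}_k\mathscr{B}$ (there is a non-empty locally invertible pair from $\mathscr{A}$ to $\mathscr{B}$) if and only if Duplicator has a winning strategy in the back-and-forth $\mathbb{E}_k$ game between $\mathscr{A}$ and $\mathscr{B}$.
   Context: $\mathbb{E}_k A=A^{\le k}$ is the set of non-empty sequences over $A$ of length $\le k$, forest-ordered by prefix $\sqsubseteq$; add the empty sequence $\bot$ as root; $s\prec s'$ means $s'$ extends $s$ by exactly one element. For any function $f:A^{\le k}\to B$, $f^*:A^{\le k}\to B^{\le k}$ is $f^*[a_1,\dots,a_j]=[f[a_1],f[a_1,a_2],\dots,f[a_1,\dots,a_j]]$ (and $f^*(\bot)=\bot$). $\mathsf{W}_{\mathscr{A},\mathscr{B}}$ is the set of pairs $(s,t)$ with $s=[a_1,\dots,a_j]$, $t=[b_1,\dots,b_j]$ of equal length such that $\{(a_i,b_i)\}$ is a partial isomorphism: $a_i=a_l\iff b_i=b_l$, and for every $n$-ary $R\in\sigma$ and indices $i_1,\dots,i_n$, $R^{\mathscr{A}}(a_{i_1},\dots,a_{i_n})\iff R^{\mathscr{B}}(b_{i_1},\dots,b_{i_n})$. $\mathcal{S}(\mathscr{A},\mathscr{B})$ is the set of functions $f:A^{\le k}\to B$ with $(s,f^*(s))\in\mathsf{W}_{\mathscr{A},\mathscr{B}}$ for all $s\in A^{\le k}$ (such $f$ are homomorphisms $\mathbb{E}_k\mathscr{A}\to\mathscr{B}$,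 where $\mathbb{E}_k\mathscr{A}$ has $R(s_1,\dots,s_n)$ iff the $s_i$ are pairwise prefix-comparable and $R^{\mathscr{A}}$ holds of their last elements). A locally invertible pair from $\mathscr{A}$ to $\mathscr{B}$ is a pair $(F,G)$ with $F\subseteq\mathcal{S}(\mathscr{A},\mathscr{B})$, $G\subseteq\mathcal{S}(\mathscr{B},\mathscr{A})$ such that: for all $f\in F$ and $s\in A^{\le k}$ there is $g\in G$ with $g^*f^*(s)=s$; and for all $g\in G$ and $t\in B^{\le k}$ there is $f\in F$ with $f^*g^*(t)=t$. It is non-empty if $F$ (equivalently $G$) is non-empty. The back-and-forth $\mathbb{E}_k$ game: positions are pairs $(s,t)$, initially $(\bot,\bot)$. In each round, either Spoiler chooses $s'\succ s$ and Duplicator responds with $t'\succ t$, giving $(s',t')$, or Spoiler chooses $t''\succ t$ and Duplicator responds with $s''\succ s$, giving $(s'',t'')$; Duplicator wins the round if the new position is in $\mathsf{W}_{\mathscr{A},\mathscr{B}}$. The game continues while moves are available (at most $k$ rounds); a winning strategy for Duplicator wins every round. *)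

From mathcomp Require Import all_boot.
From Stdlib Require List.

Set Implicit Arguments.
Unset Strict Implicit.
Unset Printing Implicit Defensive.

Record signature := Signature { sym : Type; arity : sym -> nat }.

Record structure (sg : signature) := Structure {
  carrier :> Type;
  interp : forall R : sym sg, ('I_(arity R) -> carrier) -> Prop }.

Section Defs.
Variable sg : signature.

Definition inE (k : nat) {A : Type} (s : seq A) : Prop := 0 < size s <= k.

(* f^* [a1..aj] = [f[a1], f[a1,a2], ..., f[a1..aj]];  f^*(bot) = bot. *)
Definition fstar {A B : Type} (f : seq A -> B) (s : seq A) : seq B :=
  [seq f (take i s) | i <- iota 1 (size s)].

(* (s,t) in W_{A,B}: equal length and {(a_i,b_i)} is a partial isomorphism. *)
Definition Wpos (MA MB : structure sg) (s : seq MA) (t : seq MB) : Prop :=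
  size s = size t /\
  (forall p q, List.In p (zip s t) -> List.In q (zip s t) ->
      (p.1 = q.1 <-> p.2 = q.2)) /\
  (forall (R : sym sg) (c : 'I_(arity R) -> MA * MB),
      (forall m, List.In (c m) (zip s t)) ->
      (@interp sg MA R (fun m => (c m).1) <-> @interp sg MB R (fun m => (c m).2))).

Definition inS (k : nat) (MA MB : structure sg) (f : seq MA -> MB) : Prop :=
  forall s : seq MA, inE k s -> Wpos s (fstar f s).

Definition loc_inv_pair (k : nat) (MA MB : structure sg)
    (F : (seq MA -> MB) -> Prop) (G : (seq MB -> MA) -> Prop) : Prop :=
  (forall f, F f -> inS k f) /\
  (forall g, G g -> inS k g) /\
  (forall f (s : seq MA), F f -> inE k s ->
      exists g, G g /\ fstar g (fstar f s) = s) /\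
  (forall g (t : seq MB), G g -> inE k t ->
      exists f, F f /\ fstar f (fstar g t) = t).

Definition Ek_equiv (k : nat) (MA MB : structure sg) : Prop :=
  exists F G, @loc_inv_pair k MA MB F G /\ exists f, F f.

(* A Duplicator strategy in the back-and-forth E_k game: given the current
   position (s,t) and Spoiler's move (an element on one side), a response. *)
Record dup_strategy (MA MB : structure sg) := DupStrategy {
  respA : seq MA -> seq MB -> MA -> MB;
  respB : seq MA -> seq MB -> MB -> MA }.

Inductive reachable (k : nat) (MA MB : structure sg) (st : dup_strategy MA MB)
  : seq MA -> seq MB -> Prop :=
| reach_init : reachable k st [::] [::]
| reach_A s t (a : MA) : reachable k st s t -> size s < k ->
    reachable k st (rcons s a) (rcons t (respA st s t a))
| reach_B s t (b : MB) : reachable k st s t -> size t < k ->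
    reachable k st (rcons s (respB st s t b)) (rcons t b).

Definition winning (k : nat) (MA MB : structure sg) (st : dup_strategy MA MB)
  : Prop :=
  forall s t, reachable k st s t -> s <> [::] -> Wpos s t.

Definition dup_wins (k : nat) (MA MB : structure sg) : Prop :=
  exists st : dup_strategy MA MB, winning k st.

End Defs.

From Pilot Require Import Defs.
From mathcomp Require Import all_boot.
From Stdlib Require Import ClassicalEpsilon.
From Stdlib Require List.

Set Implicit Arguments.
Unset Strict Implicit.
Unset Printing Implicit Defensive.

(* Forth: from a locally invertible pair (F, G), Duplicator keeps positions
   (s, t) with f^* s = t for some f in F and g^* t = s for some g in G, and
   answers with the next value of such an f or g; local invertibility is
   exactly what restores the other half of this invariant after each move.
   Back: from a winning strategy, take for F (resp. G) the maps whose starred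
   extension, applied on the A (resp. B) side, only produces positions
   reachable in plays along the strategy.  A map of G through a reachable
   position (s, t) is obtained by replaying s along the prefixes of t and
   answering with the strategy everywhere else. *)

Lemma size_fstar (A B : Type) (f : seq A -> B) s : size (fstar f s) = size s.
Proof. by rewrite /fstar size_map size_iota. Qed.

Lemma fstar_rcons (A B : Type) (f : seq A -> B) s a :
  fstar f (rcons s a) = rcons (fstar f s) (f (rcons s a)).
Proof.
rewrite /fstar size_rcons -[(size s).+1]addn1 iotaD map_cat cats1 add1n.
rewrite -(size_rcons s a) take_size; congr rcons; apply/eq_in_map => i; rewrite mem_iota.
by case/andP=> _ lt_i; rewrite -cats1 takel_cat // -ltnS -add1n.
Qed.

Lemma fstar_last (A B : Type) (b0 : B) (H : seq A -> seq B) :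
  H [::] = [::] -> (forall u a, exists y, H (rcons u a) = rcons (H u) y) ->
  forall u, fstar (fun v => last b0 (H v)) u = H u.
Proof.
move=> H0 HS; elim/last_ind => [|u a IH]; first by rewrite H0.
by rewrite fstar_rcons IH; have [y ->] := HS u a; rewrite last_rcons.
Qed.

Section Replay.

Variables (A B : Type) (k : nat) (P : seq A -> seq B -> Prop).
Variable next : seq A -> seq B -> B -> A.
Hypothesis P_next :
  forall x u b, P x u -> size u < k -> P (rcons x (next x u b)) (rcons u b).
Variables (a0 : A) (s : seq A) (t : seq B).
Hypothesis size_st : size s = size t.
Hypothesis P_take : forall j, P (take j s) (take j t).

Definition follow (x : seq A) (u : seq B) (b : B) : A :=
  if excluded_middle_informative (take (size u).+1 t = rcons u b) is left _
  then nth a0 s (size u) else next x u b.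

Fixpoint replay_from (x : seq A) (p u : seq B) : seq A :=
  if u is b :: u' then replay_from (rcons x (follow x p b)) (rcons p b) u'
  else x.

Definition replay (u : seq B) : seq A := replay_from [::] [::] u.

Lemma replay_from_rcons x p u b :
  replay_from x p (rcons u b) =
  rcons (replay_from x p u) (follow (replay_from x p u) (p ++ u) b).
Proof.
elim: u x p => [|c u IH] x p /=; first by rewrite cats0.
by rewrite IH cat_rcons.
Qed.

Lemma replay_rcons u b :
  replay (rcons u b) = rcons (replay u) (follow (replay u) u b).
Proof. exact: replay_from_rcons. Qed.

Lemma replay_prefix u : take (size u) t = u -> replay u = take (size u) s.
Proof.
elim/last_ind: u => [|u b IH] pre_ub; first by rewrite take0.
rewrite size_rcons in pre_ub *.
have lt_u_t : size u < size t.
  have := congr1 size pre_ub; rewrite size_take size_rcons.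
  by case: ltnP => [/ltnW|_ ->].
have pre_u : take (size u) t = u.
  by rewrite -(take_takel _ (leqnSn (size u))) pre_ub -cats1 takel_cat ?take_size.
rewrite replay_rcons IH // /follow.
case: excluded_middle_informative => [_|]; last by [].
by rewrite (take_nth a0) // size_st.
Qed.

Lemma P_replay u : size u <= k -> P (replay u) u.
Proof.
elim/last_ind: u => [|u b IH]; first by have := P_take 0; rewrite !take0.
rewrite size_rcons => lt_u_k.
case: (excluded_middle_informative (take (size (rcons u b)) t = rcons u b)).
  by move=> pre_ub; rewrite replay_prefix // -{2}pre_ub.
move=> not_pre; rewrite replay_rcons /follow.
case: excluded_middle_informative => [pre_ub|_]; first by rewrite size_rcons in not_pre.
by apply: P_next => //; apply: IH; apply: ltnW.
Qed.

Lemma exists_fstar_through :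
  exists g : seq B -> A,
    fstar g t = s /\ forall u, size u <= k -> P (fstar g u) u.
Proof.
have fstar_replay := fstar_last a0 (erefl : replay [::] = [::])
  (fun u b => ex_intro _ _ (replay_rcons u b)).
exists (fun u => last a0 (replay u)); split => [|u le_u_k].
  by rewrite fstar_replay replay_prefix ?take_size // -size_st take_size.
by rewrite fstar_replay; apply: P_replay.
Qed.

End Replay.

Definition realized (A B : Type) (F : (seq A -> B) -> Prop) s t : Prop :=
  exists f, F f /\ fstar f s = t.

Definition pick_map (A B : Type) (i : inhabited (seq A -> B))
    (F : (seq A -> B) -> Prop) s t : seq A -> B :=
  epsilon i (fun f => F f /\ fstar f s = t).

Lemma realized_rcons (A B : Type) (i : inhabited (seq A -> B)) F s t a :
  realized F s t -> realized F (rcons s a) (rcons t (pick_map i F s t (rcons s a))).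
Proof.
move=> realized_st; have [F_f fs_t] := epsilon_spec i _ realized_st.
by exists (pick_map i F s t); rewrite fstar_rcons fs_t.
Qed.

Section Game.

Variables (sg : signature) (k : nat).

Lemma Wpos_sym (MA MB : structure sg) (s : seq MA) (t : seq MB) :
  Wpos s t -> Wpos t s.
Proof.
case=> size_st [iso_eq iso_rel].
have in_zip_swap p : List.In p (zip t s) -> List.In (p.2, p.1) (zip s t).
  elim: t s {size_st iso_eq iso_rel} => [|b t IH] [|a s] //= [<-|p_in];
    [by left | by right; apply: IH].
split=> //; split=> [p q /in_zip_swap p_in /in_zip_swap q_in|R c c_in].
  by have := iso_eq _ _ p_in q_in; rewrite /=; tauto.
have := iso_rel R (fun m => ((c m).2, (c m).1)) (fun m => in_zip_swap _ (c_in m)).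
by rewrite /=; tauto.
Qed.

Definition swap_strategy (MA MB : structure sg) (st : dup_strategy MA MB) :
    dup_strategy MB MA :=
  DupStrategy (fun t s b => respB st s t b) (fun t s a => respA st s t a).

Lemma reachable_swap (MA MB : structure sg) (st : dup_strategy MA MB) s t :
  reachable k (swap_strategy st) t s <-> reachable k st s t.
Proof.
split; elim=> [|x u c _ IH lt_k|x u c _ IH lt_k]; try exact: reach_init.
- exact: reach_B IH lt_k.
- exact: reach_A IH lt_k.
- exact: (reach_B (st := swap_strategy st) _ IH lt_k).
- exact: (reach_A (st := swap_strategy st) _ IH lt_k).
Qed.

Lemma reachable_size (MA MB : structure sg) (st : dup_strategy MA MB) s t :
  reachable k st s t -> size s = size t /\ size s <= k.
Proof.
elim=> [|x u c _ [size_xu _] lt_k|x u c _ [size_xu _] lt_k] //;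
  by rewrite !size_rcons ?size_xu in lt_k *.
Qed.

Lemma reachable_take (MA MB : structure sg) (st : dup_strategy MA MB) s t j :
  reachable k st s t -> reachable k st (take j s) (take j t).
Proof.
move=> reach_st; elim: reach_st j => [|x u c reach_xu IH lt_k|x u c reach_xu IH lt_k] j;
  first exact: reach_init.
all: have [size_xu _] := reachable_size reach_xu.
all: case: (leqP j (size x)) => [le_j|lt_j].
all: try by rewrite -!cats1 !takel_cat -?size_xu //; apply: IH.
all: rewrite !take_oversize ?size_rcons -?size_xu //.
- exact: reach_A.
- exact: reach_B.
Qed.

Definition forth_map (MA MB : structure sg) (st : dup_strategy MA MB)
    (f : seq MA -> MB) : Prop :=
  forall s, size s <= k -> reachable k st s (fstar f s).

Definition back_map (MA MB : structure sg) (st : dup_strategy MA MB)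
    (g : seq MB -> MA) : Prop :=
  forall t, size t <= k -> reachable k st (fstar g t) t.

Lemma exists_back_map (MA MB : structure sg) (a0 : MA) (st : dup_strategy MA MB) s t :
  reachable k st s t -> exists g, back_map st g /\ fstar g t = s.
Proof.
move=> reach_st; have [size_st _] := reachable_size reach_st.
have [g [gt_s g_reach]] := exists_fstar_through (P := reachable k st)
  (fun x u b reach_xu lt_k => reach_B b reach_xu lt_k) a0 size_st
  (fun j => reachable_take j reach_st).
by exists g.
Qed.

Lemma exists_forth_map (MA MB : structure sg) (b0 : MB) (st : dup_strategy MA MB) s t :
  reachable k st s t -> exists f, forth_map st f /\ fstar f s = t.
Proof.
move/reachable_swap/(exists_back_map b0) => [f [f_reach fs_t]].
by exists f; split=> // s' le_s'_k; apply/reachable_swap/f_reach.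
Qed.

Lemma winning_Ek_equiv (MA MB : structure sg) (a0 : MA) (b0 : MB)
    (st : dup_strategy MA MB) :
  winning k st -> Ek_equiv k MA MB.
Proof.
move=> win; exists (forth_map st), (back_map st); split; last first.
  by have [f [f_reach _]] := exists_forth_map b0 (reach_init k st); exists f.
have nonnil (T : Type) (x : seq T) : Defs.inE k x -> x <> [::] by case: x.
split=> [f f_reach s s_in|].
  by apply: win; [case/andP: s_in => _ /f_reach | apply: nonnil].
split=> [g g_reach t t_in|].
  apply: Wpos_sym; apply: win; first by case/andP: t_in => _ /g_reach.
  by apply: nonnil; rewrite /Defs.inE size_fstar.
split=> [f s f_reach /andP[_ le_s_k]|g t g_reach /andP[_ le_t_k]].
  by have [g] := exists_back_map a0 (f_reach s le_s_k); exists g.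
by have [f] := exists_forth_map b0 (g_reach t le_t_k); exists f.
Qed.

Lemma loc_inv_pair_sym (MA MB : structure sg) F G :
  @loc_inv_pair sg k MA MB F G -> loc_inv_pair k G F.
Proof. by case=> ? [? [? ?]]. Qed.

Lemma realized_step (MA MB : structure sg) F G
    (FG_inv : @loc_inv_pair sg k MA MB F G) (i : inhabited (seq MA -> MB)) s t a :
  realized F s t -> size s < k ->
  realized F (rcons s a) (rcons t (pick_map i F s t (rcons s a))) /\
  realized G (rcons t (pick_map i F s t (rcons s a))) (rcons s a).
Proof.
move=> realized_st lt_k; have [f [F_f fsa]] := realized_rcons i a realized_st.
split; first by exists f.
have [_ [_ [FG _]]] := FG_inv.
have sa_in : Defs.inE k (rcons s a) by rewrite /Defs.inE size_rcons lt_k.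
have [g [G_g gfsa]] := FG f (rcons s a) F_f sa_in.
by exists g; rewrite -fsa.
Qed.

Definition inverse_strategy (MA MB : structure sg)
    (F : (seq MA -> MB) -> Prop) (G : (seq MB -> MA) -> Prop)
    (iF : inhabited (seq MA -> MB)) (iG : inhabited (seq MB -> MA)) : dup_strategy MA MB :=
  DupStrategy (fun s t a => pick_map iF F s t (rcons s a))
              (fun s t b => pick_map iG G t s (rcons t b)).

Lemma reachable_inverse_strategy (MA MB : structure sg) F G
    (FG_inv : @loc_inv_pair sg k MA MB F G) iF iG s t :
  realized F [::] [::] -> realized G [::] [::] ->
  reachable k (inverse_strategy F G iF iG) s t -> realized F s t /\ realized G t s.
Proof.
move=> F_nil G_nil; elim=> [|x u a _ [Fxu Gux] lt_k|x u b _ [Fxu Gux] lt_k] //.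
- exact (realized_step FG_inv iF a Fxu lt_k).
- by have [] := realized_step (loc_inv_pair_sym FG_inv) iG b Gux lt_k.
Qed.

Lemma Ek_equiv_winning (MA MB : structure sg) (a0 : MA) :
  0 < k -> Ek_equiv k MA MB -> dup_wins k MA MB.
Proof.
move=> k_gt0 [F [G [FG_inv [f0 F_f0]]]].
have [F_S [_ [FG _]]] := FG_inv.
have [g0 [G_g0 _]] := FG f0 [:: a0] F_f0 k_gt0.
exists (inverse_strategy F G (inhabits f0) (inhabits g0)) => s t reach_st s_nonnil.
have [[f [F_f fs_t]] _] := reachable_inverse_strategy FG_inv
  (ex_intro _ f0 (conj F_f0 erefl)) (ex_intro _ g0 (conj G_g0 erefl)) reach_st.
have [_ le_s_k] := reachable_size reach_st.
rewrite -fs_t; apply: (F_S f F_f s); rewrite /Defs.inE le_s_k andbT.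
by move: s_nonnil; case: (s).
Qed.

End Game.

Theorem mainTheorem6 (sg : signature) (MA MB : structure sg) (k : nat)
  (hA : inhabited MA) (hB : inhabited MB) (hk : 0 < k) :
  Ek_equiv k MA MB <-> dup_wins k MA MB.
Proof.
case: hA => a0; case: hB => b0; split; first exact: Ek_equiv_winning.
by case=> st; apply: winning_Ek_equiv.
Qed.
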